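(* Let $R$ be a ring, let $\mathcal C$ be a full subcategory of $\operatorname{Mod-}R$ all of whose objects are indecomposable slender right $R$-modules, and let $\mathcal P,\mathcal Q$ be completely prime ideals of $\mathcal C$ such that for every $A\in\operatorname{Ob}(\mathcal C)$ an endomorphism $f\colon A\to A$ is an automorphism if and only if $f\notin\mathcal P(A,A)\cup\mathcal Q(A,A)$. Assume $\mathcal C$ satisfies Condition (DSP). Let $\{A_i\mid i\in I\}$ and $\{B_j\mid j\in J\}$ be countable families of objects of $\mathcal C$ with $\prod_{i\in I}A_i\cong\prod_{j\in J}B_j$. Then there exist bijections $\sigma,\tau\colon I\to J$ with $[A_i]_{\mathcal P}=[B_{\sigma(i)}]_{\mathcal P}$ and $[A_i]_{\mathcal Q}=[B_{\tau(i)}]_{\mathcal Q}$ for every $i\in I$.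
   Context: A completely prime ideal $\mathcal P$ of a full subcategory $\mathcal C$ of $\operatorname{Mod-}R$ consists of a subgroup $\mathcal P(A,B)$ of $\operatorname{Hom}_R(A,B)$ for each pair of objects $A,B$ of $\mathcal C$ such that: (1) for all objects $A,B,C$ and morphisms $f\colon A\to B$, $g\colon B\to C$, one has $gf\in\mathcal P(A,C)$ if and only if $f\in\mathcal P(A,B)$ or $g\in\mathcal P(B,C)$; (2) $\mathcal P(A,A)\neq\operatorname{Hom}_R(A,A)$ for every object $A$. For objects $A,B$, write $[A]_{\mathcal P}=[B]_{\mathcal P}$ (''same $\mathcal P$ class'') if $\mathcal P(A,B)\ne\operatorname{Hom}_R(A,B)$ and $\mathcal P(B,A)\neq\operatorname{Hom}_R(B,A)$. $\mathcal C$ satisfies Condition (DSP) if whenever $A,B,C,D$ are right $R$-modules with $A\oplus B\cong C\oplus D$ and $A,B,C\in\operatorname{Ob}(\mathcal C)$, then $D\in\operatorname{Ob}(\mathcal C)$. A right $R$-module $M$ is slender if for every homomorphism $f\colon R^\omega=\prod_{n<\omega}e_nR\to M$ (with $e_n$ the element having $1$ in position $n$ and $0$ elsewhere) there is $n_0$ with $f(e_n)=0$ for all $n\ge n_0$. ''Countable'' means finite or countably infinite. *)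

(* Right R-modules are modelled as left modules over the
   converse ring R^c:  (r : R^c) *: m  stands for  m . r. *)
From HB Require Import structures.
From mathcomp Require Import all_boot all_order all_algebra.
Set Implicit Arguments. Unset Strict Implicit. Unset Printing Implicit Defensive.
Import Order.TTheory GRing.Theory Num.Theory.
Local Open Scope ring_scope.

Notation rmod R := (lmodType (R^c)).

Definition is_hom (R : pzRingType) (A B : rmod R) (f : A -> B) : Prop :=
  (forall x y : A, f (x + y) = f x + f y) /\
  (forall (r : R^c) (x : A), f (r *: x) = r *: f x).

Definition submod (R : pzRingType) (M : rmod R) (X : M -> Prop) : Prop :=
  X 0 /\ (forall x y, X x -> X y -> X (x + y)) /\
  (forall (r : R^c) x, X x -> X (r *: x)).

Definition indecomposable (R : pzRingType) (M : rmod R) : Prop :=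
  (exists m : M, m <> 0) /\
  forall X Y : M -> Prop, submod X -> submod Y ->
    (forall m, X m -> Y m -> m = 0) ->
    (forall m, exists x y, X x /\ Y y /\ m = x + y) ->
    (forall x, X x -> x = 0) \/ (forall y, Y y -> y = 0).

Definition unit_vec (R : pzRingType) (n : nat) : nat -> R :=
  fun k => if k == n then 1 else 0.

(* Homomorphisms of right R-modules R^omega -> M, where R^omega = nat -> R
   with componentwise addition and right action (x . r)(k) = x k * r. *)
Definition is_hom_Romega (R : pzRingType) (M : rmod R) (f : (nat -> R) -> M)
  : Prop :=
  (forall x y : nat -> R, f (fun k => x k + y k) = f x + f y) /\
  (forall (r : R) (x : nat -> R), f (fun k => x k * r) = (r : R^c) *: f x).

Definition slender (R : pzRingType) (M : rmod R) : Prop :=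
  forall f : (nat -> R) -> M, is_hom_Romega f ->
    exists n0 : nat, forall n, (n0 <= n)%N -> f (unit_vec R n) = 0.

(* Full subcategories of Mod-R are given by their class of objects. *)
Definition subcat (R : pzRingType) := rmod R -> Prop.

Definition hom_ideal (R : pzRingType) :=
  forall A B : rmod R, (A -> B) -> Prop.

Definition completely_prime (R : pzRingType) (C : subcat R)
    (P : hom_ideal R) : Prop :=
  (forall A B, C A -> C B ->
     (forall f, P A B f -> is_hom f) /\
     P A B (fun _ => 0) /\
     (forall f g, P A B f -> P A B g -> P A B (fun x => f x - g x))) /\
  (forall A B D, C A -> C B -> C D ->
     forall (f : A -> B) (g : B -> D), is_hom f -> is_hom g ->
       (P A D (fun x => g (f x)) <-> P A B f \/ P B D g)) /\
  (forall A, C A -> exists f : A -> A, is_hom f /\ ~ P A A f).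

Definition same_class (R : pzRingType) (P : hom_ideal R) (A B : rmod R)
  : Prop :=
  (exists f : A -> B, is_hom f /\ ~ P A B f) /\
  (exists g : B -> A, is_hom g /\ ~ P B A g).

(* A (+) B ~= C (+) D, with external direct sums realised as pair types. *)
Definition dsum_iso (R : pzRingType) (A B C D : rmod R)
    (phi : A * B -> C * D) : Prop :=
  bijective phi /\
  (forall x y : A * B,
     phi (x.1 + y.1, x.2 + y.2) = ((phi x).1 + (phi y).1, (phi x).2 + (phi y).2)) /\
  (forall (r : R^c) (x : A * B),
     phi (r *: x.1, r *: x.2) = (r *: (phi x).1, r *: (phi x).2)).

Definition DSP (R : pzRingType) (C : subcat R) : Prop :=
  forall A B C' D : rmod R, C A -> C B -> C C' ->
    (exists phi : A * B -> C' * D, dsum_iso phi) -> C D.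

(* prod_i A_i ~= prod_j B_j, products realised as dependent function types
   with componentwise operations. *)
Definition prod_iso (R : pzRingType) (I J : Type) (A : I -> rmod R)
    (B : J -> rmod R) (Phi : (forall i, A i) -> (forall j, B j)) : Prop :=
  bijective Phi /\
  (forall x y : forall i, A i,
     Phi (fun i => x i + y i) = (fun j => Phi x j + Phi y j)) /\
  (forall (r : R^c) (x : forall i, A i),
     Phi (fun i => r *: x i) = (fun j => r *: Phi x j)).

(* Fix a P-class c.  If finitely many A i of class c are mutually
   complementary direct summands of a finite direct sum of objects Y k, then
   at least as many Y k lie in c.  Remove the A i one at a time: the identity
   of A i is the sum of its factorisations through the Y k, so as P and Q are
   completely prime, either one factorisation lies in neither ideal (then
   A i is a summand, hence by indecomposability a copy, of some Y j), or one
   outside P and one outside Q add up to an automorphism (then A i is a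
   summand of Y j (+) Y k, whose complement lies in C by (DSP), and Y k or
   the complement lies in c).  Either way one Y of class c is used up.
   Slenderness reduces the product isomorphism to this finite situation, so
   every class contains as many A i as B j, up to countable cardinality;
   matching the members of each class in the order of their codes gives
   sigma, and tau likewise. *)

From HB Require Import structures.
From mathcomp Require Import all_boot all_order all_algebra.
From mathcomp Require Import boolp.
Set Implicit Arguments. Unset Strict Implicit. Unset Printing Implicit Defensive.
Import GRing.Theory.
Local Open Scope ring_scope.

Section Homomorphisms.
Variable R : pzRingType.
Implicit Types A B D : rmod R.

Lemma hom0 A B (f : A -> B) : is_hom f -> f 0 = 0.
Proof. by move=> [fD _]; apply: (addrI (f 0)); rewrite -fD !addr0. Qed.

Lemma homB A B (f : A -> B) x y : is_hom f -> f (x - y) = f x - f y.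
Proof.
move=> hf; apply: (addrI (f y)); rewrite -hf.1 [f y + _]addrC subrK.
by rewrite addrC subrK.
Qed.

Lemma hom_id A : is_hom (fun x : A => x).
Proof. by []. Qed.

Lemma hom_comp A B D (f : A -> B) (g : B -> D) :
  is_hom f -> is_hom g -> is_hom (fun x => g (f x)).
Proof. by move=> [fD fZ] [gD gZ]; split=> [x y|r x]; rewrite ?fD ?gD ?fZ ?gZ. Qed.

Lemma hom_add A B (f g : A -> B) :
  is_hom f -> is_hom g -> is_hom (fun x => f x + g x).
Proof.
move=> [fD fZ] [gD gZ]; split=> [x y|r x]; first by rewrite fD gD addrACA.
by rewrite fZ gZ scalerDr.
Qed.

Lemma hom_sub A B (f g : A -> B) :
  is_hom f -> is_hom g -> is_hom (fun x => f x - g x).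
Proof.
move=> [fD fZ] [gD gZ]; split=> [x y|r x]; first by rewrite fD gD opprD addrACA.
by rewrite fZ gZ scalerBr.
Qed.

Lemma hom_zero A B : is_hom (fun _ : A => 0 : B).
Proof. by split=> [x y|r x]; rewrite ?addr0 ?scaler0. Qed.

Lemma hom_fst A B : is_hom (fun v : A * B => v.1).
Proof. by []. Qed.

Lemma hom_snd A B : is_hom (fun v : A * B => v.2).
Proof. by []. Qed.

Lemma hom_pair A B D (f : A -> B) (g : A -> D) :
  is_hom f -> is_hom g -> is_hom (fun x => (f x, g x)).
Proof. by move=> [fD fZ] [gD gZ]; split=> [x y|r x]; rewrite ?fD ?gD ?fZ ?gZ. Qed.

Lemma hom_can A B (f : A -> B) g : is_hom f -> cancel f g -> cancel g f -> is_hom g.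
Proof.
move=> [fD fZ] fK gK; split=> [x y|r x]; apply: (can_inj fK).
  by rewrite fD !gK.
by rewrite fZ !gK.
Qed.

End Homomorphisms.

Unset Implicit Arguments.
Section CompletelyPrimeIdeals.
Variables (R : pzRingType) (C : subcat R) (P : hom_ideal R).
Hypothesis HP : completely_prime C P.
Set Implicit Arguments.
Implicit Types A B D : rmod R.

Lemma ideal0 A B : C A -> C B -> P A B (fun _ => 0).
Proof. by move=> CA CB; case: (HP.1 A B CA CB) => _ []. Qed.

Lemma idealB A B f g : C A -> C B -> P A B f -> P A B g ->
  P A B (fun x => f x - g x).
Proof. by move=> CA CB; case: (HP.1 A B CA CB) => _ [] _; apply. Qed.

Lemma idealD A B f g : C A -> C B -> P A B f -> P A B g ->
  P A B (fun x => f x + g x).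
Proof.
move=> CA CB Pf Pg; have := idealB CA CB Pf (idealB CA CB (ideal0 CA CB) Pg).
by congr P; apply: funext => x; rewrite sub0r opprK.
Qed.

Lemma ideal_sum A B (K : Type) (r : seq K) (p : pred K) (F : K -> A -> B) :
  C A -> C B -> (forall k, p k -> P A B (F k)) ->
  P A B (fun x => \sum_(k <- r | p k) F k x).
Proof.
move=> CA CB PF; elim: r => [|k r IH].
  by under [fun x => _]funext => x do rewrite big_nil; exact: ideal0.
under [fun x => _]funext => x do rewrite big_cons.
by case pk: (p k); [exact: idealD (PF _ pk) IH | exact: IH].
Qed.

Lemma ideal_comp A B D (f : A -> B) (g : B -> D) : C A -> C B -> C D ->
  is_hom f -> is_hom g -> (P A D (fun x => g (f x)) <-> P A B f \/ P B D g).
Proof. by move=> CA CB CD hf hg; apply: HP.2.1. Qed.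

Lemma id_notin_ideal A : C A -> ~ P A A (fun x => x).
Proof.
move=> CA Pid; have [f [hf nPf]] := HP.2.2 A CA; apply: nPf.
by apply: (ideal_comp CA CA CA (@hom_id R A) hf).2; left.
Qed.

Lemma exists_term_notin_ideal A (K : finType) (p : pred K) (t : K -> A -> A) :
  C A -> (forall x, \sum_(k | p k) t k x = x) -> exists k, p k /\ ~ P A A (t k).
Proof.
move=> CA sum_id; apply: contrapT => noterm; apply: (id_notin_ideal CA).
have -> : (fun x : A => x) = (fun x => \sum_(k <- index_enum K | p k) t k x).
  by apply: funext => x; rewrite sum_id.
apply: ideal_sum => // k pk; apply: contrapT => nPk.
by apply: noterm; exists k.
Qed.

Lemma same_class_refl A : C A -> same_class P A A.
Proof.
by move=> CA; split; exists (fun x => x); split => //; apply: id_notin_ideal.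
Qed.

Lemma same_class_sym A B : same_class P A B -> same_class P B A.
Proof. by case. Qed.

Lemma same_class_trans A B D : C A -> C B -> C D ->
  same_class P A B -> same_class P B D -> same_class P A D.
Proof.
move=> CA CB CD [[f [hf nf]] [g [hg ng]]] [[f' [hf' nf']] [g' [hg' ng']]].
split.
  exists (fun x => f' (f x)); split; first exact: hom_comp.
  by case/(ideal_comp CA CB CD hf hf').
exists (fun x => g (g' x)); split; first exact: hom_comp.
by case/(ideal_comp CD CB CA hg' hg).
Qed.

Lemma same_class_of_comp A B (f : A -> B) (g : B -> A) : C A -> C B ->
  is_hom f -> is_hom g -> ~ P A A (fun x => g (f x)) -> same_class P A B.
Proof.
move=> CA CB hf hg nP; split.
  by exists f; split => // Pf; apply/nP/(ideal_comp CA CB CA hf hg); left.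
by exists g; split => // Pg; apply/nP/(ideal_comp CA CB CA hf hg); right.
Qed.

Lemma same_class_of_sum_id (Y A D : rmod R)
    (f : Y -> A) (g : A -> Y) (f' : Y -> D) (g' : D -> Y) :
  C Y -> C A -> C D -> is_hom f -> is_hom g -> is_hom f' -> is_hom g' ->
  (forall y, g (f y) + g' (f' y) = y) -> same_class P Y A \/ same_class P Y D.
Proof.
move=> CY CA CD hf hg hf' hg' sum_id.
have [Pgf|nPgf] := pselect (P Y Y (fun y => g (f y))).
  have [Pgf'|nPgf'] := pselect (P Y Y (fun y => g' (f' y))).
    case: (id_notin_ideal CY); have := idealD CY CY Pgf Pgf'.
    by congr P; apply: funext.
  by right; apply: same_class_of_comp hf' hg' nPgf'.
by left; apply: same_class_of_comp hf hg nPgf.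
Qed.

End CompletelyPrimeIdeals.

Section Kernel.
Variables (R : pzRingType) (U X : rmod R) (g : U -> X).
Hypothesis hg : is_hom g.

Definition kernel_pred : pred U := fun u => g u == 0.

Lemma kernel_submod_closed : subsemimod_closed kernel_pred.
Proof.
rewrite /kernel_pred; split; first split.
- by rewrite unfold_in (hom0 hg).
- by move=> u v; rewrite !unfold_in hg.1 => /eqP -> /eqP ->; rewrite addr0.
- by move=> r u; rewrite !unfold_in hg.2 => /eqP ->; rewrite scaler0.
Qed.

HB.instance Definition _ :=
  GRing.isSubmodClosed.Build (R^c) U kernel_pred kernel_submod_closed.

Record kernel := Kernel { kval : U; kvalP : kval \in kernel_pred }.
HB.instance Definition _ := [isSub for kval].
HB.instance Definition _ := [Choice of kernel by <:].
HB.instance Definition _ := [SubChoice_isSubLmodule of kernel by <:].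

Definition kernel_mod : rmod R := kernel.

Lemma hom_kval : is_hom (kval : kernel_mod -> U).
Proof. by []. Qed.

End Kernel.

Section RetractSplitting.
Variables (R : pzRingType) (Y1 Y2 A : rmod R) (a : Y1 * Y2 -> A) (b : A -> Y1 * Y2).
Hypotheses (ha : is_hom a) (hb : is_hom b) (abK : cancel b a).

Lemma complement_proof v : v - b (a v) \in kernel_pred a.
Proof. by rewrite unfold_in /kernel_pred (homB _ _ ha) abK subrr. Qed.

Definition complement_proj v : kernel_mod ha := Kernel (complement_proof v).

Lemma hom_complement_proj : is_hom complement_proj.
Proof.
split=> [v w|r v]; apply: val_inj => /=.
  by rewrite ha.1 hb.1 opprD addrACA.
by rewrite ha.2 hb.2 scalerBr.
Qed.

Lemma retract_dsum_iso : dsum_iso (fun v => (a v, complement_proj v)).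
Proof.
have [pD pZ] := hom_complement_proj.
split; last by split=> [v w|r v]; rewrite ?ha.1 ?pD ?ha.2 ?pZ.
exists (fun w : A * kernel_mod ha => b w.1 + kval w.2) => [v|[x d]] /=.
  by rewrite addrC subrK.
have adx : a (b x + kval d) = x by rewrite ha.1 abK (eqP (kvalP d)) addr0.
congr pair => //; apply: val_inj => /=.
by rewrite adx [b x + _]addrC addrK.
Qed.

End RetractSplitting.

(* id_Y2 is the sum of a map through A and a map through the complement. *)
Lemma retract_snd_class (R : pzRingType) (C : subcat R) (P : hom_ideal R)
    (HP : completely_prime C P) (Y1 Y2 A : rmod R) (a : Y1 * Y2 -> A)
    (b : A -> Y1 * Y2) (ha : is_hom a) (hb : is_hom b) (abK : cancel b a) :
  C Y2 -> C A -> C (kernel_mod ha) ->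
  same_class P Y2 A \/ same_class P Y2 (kernel_mod ha).
Proof.
move=> CY2 CA CD; have hin := hom_pair (@hom_zero _ Y2 Y1) (@hom_id _ Y2).
apply: (same_class_of_sum_id HP CY2 CA CD (hom_comp hin ha)
  (hom_comp hb (@hom_snd _ _ _)) (hom_comp hin (hom_complement_proj ha hb abK))
  (hom_comp (hom_kval ha) (@hom_snd _ _ _))).
by move=> y; rewrite addrC; apply: subrK.
Qed.

Lemma indecomposable_section_cancel (R : pzRingType) (A M : rmod R)
  (b : A -> M) (s : M -> A) : indecomposable M -> (exists x : A, x <> 0) ->
  is_hom b -> is_hom s -> cancel b s -> cancel s b.
Proof.
move=> [_ indM] [x0 x0_neq0] hb hs bK.
case: (indM (fun y => exists x, y = b x) (fun y => s y = 0)).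
- split; first by exists 0; rewrite (hom0 hb).
  split; first by move=> _ _ [x ->] [x' ->]; exists (x + x'); rewrite hb.1.
  by move=> r _ [x ->]; exists (r *: x); rewrite hb.2.
- split; first exact: hom0 hs.
  split; first by move=> y y' sy sy'; rewrite hs.1 sy sy' addr0.
  by move=> r y sy; rewrite hs.2 sy scaler0.
- by move=> _ [x ->]; rewrite bK => ->; rewrite (hom0 hb).
- move=> y; exists (b (s y)), (y - b (s y)); split; first by exists (s y).
  by split; [rewrite (homB _ _ hs) bK subrr | rewrite addrC subrK].
- move=> imb0; case: x0_neq0.
  by rewrite -(bK x0) (imb0 (b x0)) ?(hom0 hs) //; exists x0.
- move=> kers0 y; have := kers0 (y - b (s y)).
  by rewrite (homB _ _ hs) bK subrr => /(_ erefl) /eqP; rewrite subr_eq0 => /eqP.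
Qed.

Lemma card_option_pred (T : finType) (p : pred (option T)) :
  #|[pred o | p o]| = (p None + #|[pred x | p (Some x)]|)%N.
Proof.
rewrite (cardD1 None) inE; congr addn.
rewrite -(card_image (@Some_inj _) [pred x | p (Some x)]).
apply: eq_card => -[x|]; rewrite !inE /=; last by apply/esym/imageP => -[].
by rewrite (mem_image (@Some_inj _)) inE.
Qed.

Lemma big_option_pred (V : zmodType) (T : finType) (p : pred (option T))
  (G : option T -> V) :
  p None -> \sum_(o | p o) G o = G None + \sum_(x | p (Some x)) G (Some x).
Proof.
move=> pN; rewrite (bigD1 None) //=; congr (_ + _).
rewrite (reindex_omap Some id) => [|[x|] //]; last by rewrite andbF.
by apply: eq_bigl => x; rewrite eqxx !andbT.
Qed.

Unset Implicit Arguments.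
Section Exchange.
Variables (R : pzRingType) (C : subcat R) (P Q : hom_ideal R).
Hypothesis Hind : forall M, C M -> indecomposable M.
Hypotheses (HP : completely_prime C P) (HQ : completely_prime C Q).
Hypothesis Haut : forall A, C A -> forall f : A -> A, is_hom f ->
  (bijective f <-> ~ (P A A f \/ Q A A f)).
Hypothesis Hdsp : DSP C.
Set Implicit Arguments.

(* al and be exhibit the A i (i in aF) as mutually complementary direct
   summands of the direct sum of the Y k (k in aK). *)
Record summand_family (F : finType) (aF : pred F) (A : F -> rmod R)
    (K : finType) (aK : pred K) (Y : K -> rmod R)
    (al : forall i k, Y k -> A i) (be : forall k i, A i -> Y k) : Prop :=
  SummandFamily {
  family_objA : forall i, aF i -> C (A i);
  family_objY : forall k, aK k -> C (Y k);
  family_hom_al : forall i k, aF i -> aK k -> is_hom (al i k);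
  family_hom_be : forall i k, aF i -> aK k -> is_hom (be k i);
  family_id : forall i, aF i -> forall x, \sum_(k | aK k) al i k (be k i x) = x;
  family_orth : forall i i', aF i -> aF i' -> i != i' -> forall x,
    \sum_(k | aK k) al i' k (be k i x) = 0 }.
Arguments summand_family {F} aF A {K} aK Y al be.

Definition class_count (c0 : rmod R) (K : finType) (aK : pred K)
    (Y : K -> rmod R) : nat :=
  #|[pred k | aK k && `[< same_class P (Y k) c0 >]]|.

Unset Implicit Arguments.
Section ExchangeStep.
Variables (c0 : rmod R) (F : finType) (aF : pred F) (A : F -> rmod R).
Variables (K : finType) (aK : pred K) (Y : K -> rmod R).
Variables (al : forall i k, Y k -> A i) (be : forall k i, A i -> Y k) (i1 : F).
Hypotheses (Cc0 : C c0) (fam : summand_family aF A aK Y al be).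
Hypotheses (ai1 : aF i1) (cA1 : same_class P (A i1) c0).
Set Implicit Arguments.

Let aF' := [pred i | aF i && (i != i1)].

Lemma family_shift i i' (x : A i) (a : A i1) : aF i -> aF i' -> i' != i1 ->
  \sum_(k | aK k) al i' k (be k i x - be k i1 a) =
  \sum_(k | aK k) al i' k (be k i x).
Proof.
move=> ai ai' ni'.
under eq_bigr => k ak do rewrite (homB _ _ (family_hom_al fam ai' ak)).
by rewrite sumrB (family_orth fam ai1 ai' _ a) ?subr0 // eq_sym.
Qed.

Lemma summand_family_of_sums (K' : finType) (aK' : pred K') (Y' : K' -> rmod R)
    (al' : forall i k, Y' k -> A i) (be' : forall k i, A i -> Y' k) :
  (forall k, aK' k -> C (Y' k)) ->
  (forall i k, aF' i -> aK' k -> is_hom (al' i k) /\ is_hom (be' k i)) ->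
  (forall i i' (x : A i), aF' i -> aF' i' ->
     \sum_(k | aK' k) al' i' k (be' k i x) = \sum_(k | aK k) al i' k (be k i x)) ->
  summand_family aF' A aK' Y' al' be'.
Proof.
move=> CY' hom' sum'; split => //.
- by move=> i /andP [ai _]; exact: (family_objA fam ai).
- by move=> i k ai' ak'; case: (hom' i k ai' ak').
- by move=> i k ai' ak'; case: (hom' i k ai' ak').
- by move=> i ai' x; rewrite sum' // (family_id fam (andP ai').1).
move=> i i' ai' ai'' ii' x.
by rewrite sum' // (family_orth fam (andP ai').1 (andP ai'').1).
Qed.

Lemma exchange_unit_term j : aK j ->
  ~ P (A i1) (A i1) (fun x => al i1 j (be j i1 x)) ->
  ~ Q (A i1) (A i1) (fun x => al i1 j (be j i1 x)) ->
  exists (K' : finType) (aK' : pred K') (Y' : K' -> rmod R)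
    (al' : forall i k, Y' k -> A i) (be' : forall k i, A i -> Y' k),
    summand_family aF' A aK' Y' al' be' /\
    (class_count c0 aK' Y' < class_count c0 aK Y)%N.
Proof.
move=> aj nP nQ.
have CA1 := family_objA fam ai1; have CYj := family_objY fam aj.
have hal := family_hom_al fam ai1 aj; have hbe := family_hom_be fam ai1 aj.
have hu := hom_comp hbe hal.
have [ui uK Ku] : bijective (fun x => al i1 j (be j i1 x)).
  by apply/(Haut _ CA1 _ hu); case.
pose s y := ui (al i1 j y).
have hs : is_hom s := hom_comp hal (hom_can hu uK Ku).
have bsK : cancel s (be j i1).
  exact: indecomposable_section_cancel (Hind _ CYj) (Hind _ CA1).1 hbe hs uK.
have cYj : same_class P (Y j) c0.
  have cYA := same_class_sym (same_class_of_comp HP CA1 CYj hbe hal nP).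
  exact: (same_class_trans HP CYj CA1 Cc0 cYA cA1).
exists K, [pred k | aK k && (k != j)], Y, al,
  (fun k i x => be k i x - be k i1 (s (be j i x))); split.
  apply: summand_family_of_sums.
  - by move=> k /andP [ak _]; exact: (family_objY fam ak).
  - move=> i k /andP [ai _] /andP [ak _].
    split; first exact: (family_hom_al fam ai ak).
    apply: hom_sub (family_hom_be fam ai ak) (hom_comp _ (family_hom_be fam ai1 ak)).
    exact: hom_comp (family_hom_be fam ai aj) hs.
  - move=> i i' x /andP [ai _] /andP [ai' ni'].
    rewrite -(family_shift x (s (be j i x)) ai ai' ni') (bigD1 j aj) /=.
    by rewrite bsK subrr (hom0 (family_hom_al fam ai' aj)) add0r.
rewrite /class_count [X in (_ < X)%N](cardD1 j) inE /= aj (asboolT cYj) add1n ltnS.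
apply: subset_leq_card; apply/subsetP => k.
by rewrite !inE => /andP [/andP [-> ->] ->].
Qed.

Definition merge_map j k (v : Y j * Y k) : A i1 := al i1 j v.1 + al i1 k v.2.
Arguments merge_map : clear implicits.

Lemma hom_merge_map j k : aK j -> aK k -> is_hom (merge_map j k).
Proof.
move=> aj ak; apply: hom_add.
  exact: hom_comp (@hom_fst _ _ _) (family_hom_al fam ai1 aj).
exact: hom_comp (@hom_snd _ _ _) (family_hom_al fam ai1 ak).
Qed.

(* If g splits merge_map j k \o (be j i1, be k i1), the summands Y j and Y k
   are replaced by the complement of A i1 in Y j * Y k. *)
Lemma summand_family_merge j k (aj : aK j) (ak : aK k) (g : A i1 -> A i1) :
  j != k -> is_hom g -> cancel g (fun x => merge_map j k (be j i1 x, be k i1 x)) ->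
  C (kernel_mod (hom_merge_map aj ak)) ->
  exists (K' : finType) (aK' : pred K') (Y' : K' -> rmod R)
    (al' : forall i k, Y' k -> A i) (be' : forall k i, A i -> Y' k),
    summand_family aF' A aK' Y' al' be' /\
    class_count c0 aK' Y' =
      (`[< same_class P (kernel_mod (hom_merge_map aj ak)) c0 >] +
       #|[pred k' | aK k' && (k' != j) && (k' != k)
                    && `[< same_class P (Y k') c0 >]]|)%N.
Proof.
move=> jk hg gK CD; pose ha := hom_merge_map aj ak.
have hb : is_hom (fun x => (be j i1 (g x), be k i1 (g x))).
  exact: hom_comp hg (hom_pair (family_hom_be fam ai1 aj) (family_hom_be fam ai1 ak)).
pose s v := g (merge_map j k v); have hs : is_hom s := hom_comp ha hg.
pose D := kernel_mod ha; pose proj := complement_proj ha gK.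
pose Y' (o : option K) : rmod R := if o is Some k' then Y k' else D.
pose al' i o : Y' o -> A i :=
  if o is Some k' return Y' o -> A i then al i k'
  else fun d => al i j (kval d).1 + al i k (kval d).2.
pose be' o i : A i -> Y' o :=
  if o is Some k' return A i -> Y' o
  then fun x => be k' i x - be k' i1 (s (be j i x, be k i x))
  else fun x => proj (be j i x, be k i x).
pose aK' o := if o is Some k' then aK k' && (k' != j) && (k' != k) else true.
exists (option K), aK', Y', al', be'; split; last first.
  by rewrite /class_count card_option_pred.
apply: summand_family_of_sums.
- case=> [k' /andP [/andP [ak' _] _]|_] //.
  exact: (family_objY fam ak').
- move=> i o /andP [ai _] ako.
  have hbe := hom_pair (family_hom_be fam ai aj) (family_hom_be fam ai ak).
  case: o ako => [k' ako|_].
    have ak' : aK k' by case/andP: ako => /andP [].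
    split; first exact: (family_hom_al fam ai ak').
    apply: (hom_sub (family_hom_be fam ai ak')).
    apply: hom_comp (family_hom_be fam ai1 ak').
    exact: hom_comp hbe hs.
  split; last exact: hom_comp hbe (hom_complement_proj ha hb gK).
  apply: hom_add.
    apply: hom_comp (family_hom_al fam ai aj).
    exact: hom_comp (hom_kval ha) (@hom_fst _ _ _).
  apply: hom_comp (family_hom_al fam ai ak).
  exact: hom_comp (hom_kval ha) (@hom_snd _ _ _).
- move=> i i' x /andP [ai _] /andP [ai' ni'].
  rewrite big_option_pred // -(family_shift x (s (be j i x, be k i x)) ai ai' ni').
  by rewrite (bigD1 j aj) (bigD1 k) /= ?addrA // ak eq_sym jk.
Qed.

Lemma exchange_two_terms j k : aK j -> aK k ->
  ~ P (A i1) (A i1) (fun x => al i1 j (be j i1 x)) ->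
  Q (A i1) (A i1) (fun x => al i1 j (be j i1 x)) ->
  P (A i1) (A i1) (fun x => al i1 k (be k i1 x)) ->
  ~ Q (A i1) (A i1) (fun x => al i1 k (be k i1 x)) ->
  exists (K' : finType) (aK' : pred K') (Y' : K' -> rmod R)
    (al' : forall i k, Y' k -> A i) (be' : forall k i, A i -> Y' k),
    summand_family aF' A aK' Y' al' be' /\
    (class_count c0 aK' Y' < class_count c0 aK Y)%N.
Proof.
move=> aj ak nPj Qj Pk nQk.
have CA1 := family_objA fam ai1.
have CYj := family_objY fam aj; have CYk := family_objY fam ak.
have jk : j != k by apply/eqP => ejk; apply: nPj; rewrite ejk.
have hbej := family_hom_be fam ai1 aj; have hbek := family_hom_be fam ai1 ak.
pose ha := hom_merge_map aj ak.
have hu := hom_comp (hom_pair hbej hbek) ha.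
(* t_j + t_k is in neither ideal: t_j is not in P while t_k is, and
   symmetrically for Q. *)
have [ui uK Ku] : bijective (fun x => merge_map j k (be j i1 x, be k i1 x)).
  apply/(Haut _ CA1 _ hu) => -[Pu|Qu].
    apply: nPj; have := idealB HP CA1 CA1 Pu Pk.
    by congr P; apply: funext => x; rewrite /merge_map /= addrK.
  apply: nQk; have := idealB HQ CA1 CA1 Qu Qj.
  by congr Q; apply: funext => x; rewrite /merge_map /= [al i1 j _ + _]addrC addrK.
have hui := hom_can hu uK Ku.
have hb := hom_comp hui (hom_pair hbej hbek).
have CD : C (kernel_mod ha).
  exact: (Hdsp _ _ _ _ CYj CYk CA1 (ex_intro _ _ (retract_dsum_iso ha hb Ku))).
have [K' [aK' [Y' [al' [be' [fam' count']]]]]] := summand_family_merge jk hui Ku CD.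
exists K', aK', Y', al', be'; split => //; rewrite count'.
have cYj : same_class P (Y j) c0.
  have halj := family_hom_al fam ai1 aj.
  have cYA := same_class_sym (same_class_of_comp HP CA1 CYj hbej halj nPj).
  exact: (same_class_trans HP CYj CA1 Cc0 cYA cA1).
have cD_cYk : same_class P (kernel_mod ha) c0 -> same_class P (Y k) c0.
  move=> cD; have [cYA|cYD] := retract_snd_class HP hb Ku CYk CA1 CD.
    exact: (same_class_trans HP CYk CA1 Cc0 cYA cA1).
  exact: (same_class_trans HP CYk CD Cc0 cYD cD).
rewrite /class_count [X in (_ < X)%N](cardD1 j) inE /= aj (asboolT cYj).
rewrite [X in (_ < 1 + X)%N](cardD1 k) !inE /= eq_sym jk ak /=.
set lhs := (X in (_ + X < _)%N); set rhs := (X in (_ < 1 + (_ + X))%N).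
have -> : lhs = rhs.
  apply: eq_card => k'; rewrite !inE.
  by case: (aK k'); case: (k' == j); case: (k' == k).
have [cYk|ncYk] := asboolP (same_class P (Y k) c0).
  by rewrite add1n ltnS leq_add2r leq_b1.
by rewrite (asboolF (fun cD => ncYk (cD_cYk cD))).
Qed.

End ExchangeStep.

Lemma summand_family_class_count n (c0 : rmod R) (F : finType) (aF : pred F)
    (A : F -> rmod R) (K : finType) (aK : pred K) (Y : K -> rmod R)
    (al : forall i k, Y k -> A i) (be : forall k i, A i -> Y k) :
  C c0 -> #|[pred i | aF i]| = n -> summand_family aF A aK Y al be ->
  (forall i, aF i -> same_class P (A i) c0) -> (n <= class_count c0 aK Y)%N.
Proof.
elim: n F aF A K aK Y al be => // n IH F aF A K aK Y al be Cc0 cardF fam cA.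
have /card_gt0P [i1] : (0 < #|[pred i | aF i]|)%N by rewrite cardF.
rewrite inE => ai1.
have cardF' : #|[pred i | aF i && (i != i1)]| = n.
  move: cardF; rewrite (cardD1 i1) inE ai1 add1n => -[<-].
  by apply: eq_card => i; rewrite !inE andbC.
have cA' i : aF i && (i != i1) -> same_class P (A i) c0.
  by case/andP => ai _; exact: cA.
have CA1 := family_objA fam ai1.
pose t k x := al i1 k (be k i1 x).
have [j [aj nPj]] := exists_term_notin_ideal HP CA1 (family_id fam ai1).
have [k [ak nQk]] := exists_term_notin_ideal HQ CA1 (family_id fam ai1).
have [K' [aK' [Y' [al' [be' [fam' lt]]]]]] :
  exists (K' : finType) (aK' : pred K') (Y' : K' -> rmod R)
    (al' : forall i k, Y' k -> A i) (be' : forall k i, A i -> Y' k),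
    summand_family [pred i | aF i && (i != i1)] A aK' Y' al' be' /\
    (class_count c0 aK' Y' < class_count c0 aK Y)%N.
  have [[j' [aj' nPj' nQj']]|none] :=
    pselect (exists j', [/\ aK j', ~ P _ _ (t j') & ~ Q _ _ (t j')]).
    exact: (exchange_unit_term Cc0 fam ai1 (cA _ ai1) aj' nPj' nQj').
  apply: (exchange_two_terms Cc0 fam ai1 (cA _ ai1) aj ak nPj _ _ nQk).
    by apply: contrapT => nQj; apply: none; exists j.
  by apply: contrapT => nPk; apply: none; exists k.
exact: leq_ltn_trans (IH _ _ _ _ _ _ _ _ Cc0 cardF' fam' cA') lt.
Qed.

End Exchange.
Arguments summand_family {R} C {F} aF A {K} aK Y al be.

Section Single.
Variables (R : pzRingType) (I : eqType) (A : I -> rmod R).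

Definition single (i : I) (x : A i) : forall j, A j :=
  fun j => if @eqP _ i j is ReflectT e then eq_rect i A x j e else 0.

Lemma single_eq i x : single x i = x.
Proof. by rewrite /single; case: eqP => // e; rewrite [e]eq_axiomK. Qed.

Lemma single_neq i j x : i != j -> single (i:=i) x j = 0.
Proof. by rewrite /single; case: eqP. Qed.

Lemma singleD i (x y : A i) : single (x + y) = fun j => single x j + single y j.
Proof.
apply: functional_extensionality_dep => j.
by rewrite /single; case: eqP => [e|_]; [case: j / e | rewrite addr0].
Qed.

Lemma singleZ i r (x : A i) : single (r *: x) = fun j => r *: single x j.
Proof.
apply: functional_extensionality_dep => j.
by rewrite /single; case: eqP => [e|_]; [case: j / e | rewrite scaler0].
Qed.

End Single.

Definition first_elems (J : countType) (N : nat) : seq J :=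
  pmap (@pickle_inv J) (iota 0 N).

Lemma first_elems_uniq (J : countType) N : uniq (first_elems J N).
Proof. exact/(pmap_uniq (@pickle_invK J))/iota_uniq. Qed.

Lemma mem_first_elems (J : countType) N j :
  (j \in first_elems J N) = (pickle j < N)%N.
Proof. by rewrite (can2_mem_pmap (@pickle_invK J) (@pickleK_inv J)) mem_iota. Qed.

Section SlenderExpansion.
Variables (R : pzRingType) (J : countType) (B : J -> rmod R) (M : rmod R).
Variable f : (forall j, B j) -> M.
Hypothesis fD : forall y z, f (fun j => y j + z j) = f y + f z.
Hypothesis fZ : forall (r : R^c) y, f (fun j => r *: y j) = r *: f y.
Hypothesis sM : slender M.

Lemma hom_prod0 : f (fun _ => 0) = 0.
Proof.
apply: (addrI (f (fun _ => 0))); rewrite -fD addr0.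
by congr f; apply: functional_extensionality_dep => j; rewrite addr0.
Qed.

Lemma hom_prodB y z : f (fun j => y j - z j) = f y - f z.
Proof.
apply: (addrI (f z)); rewrite -fD addrC subrK.
by congr f; apply: functional_extensionality_dep => j; rewrite addrC subrK.
Qed.

Lemma slender_tail : exists n0, forall y : forall j, B j,
  (forall j, (pickle j < n0)%N -> y j = 0) -> f y = 0.
Proof.
apply: contrapT => no_tail.
have [ys ysP] : {ys : nat -> forall j, B j & forall n,
    (forall j, (pickle j < n)%N -> ys n j = 0) /\ f (ys n) <> 0}.
  apply: (@choice _ _ (fun n (y : forall j, B j) =>
    (forall j, (pickle j < n)%N -> y j = 0) /\ f y <> 0)) => n.
  apply: contrapT => no_ys; apply: no_tail; exists n => y y0.
  by apply: contrapT => fy; apply: no_ys; exists y.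
(* Since ys m j = 0 once m > pickle j, the series sum_m ys m . x m is
   coordinatewise finite and defines a map R^omega -> prod_j B j. *)
pose g (x : nat -> R) j := \sum_(m < (pickle j).+1) (x m : R^c) *: ys m j.
have hg : is_hom_Romega (fun x => f (g x)).
  split=> [x x'|r x]; [rewrite -fD | rewrite -fZ]; congr f;
    apply: functional_extensionality_dep => j.
    by rewrite /g -big_split; apply: eq_bigr => m _; rewrite scalerDl.
  by rewrite /g scaler_sumr; apply: eq_bigr => m _; rewrite scalerA.
have [n0 Hn0] := sM hg.
suff gn0 : g (unit_vec R n0) = ys n0 by case: (ysP n0) => _; rewrite -gn0 Hn0.
apply: functional_extensionality_dep => j.
rewrite /g (eq_bigr (fun m : 'I__ => if m == n0 :> nat then ys m j else 0)).
  rewrite -big_mkcond (big_ord1_eq _ (fun m => ys m j)); case: ltnP => // le.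
  by rewrite (ysP n0).1.
by move=> m _; rewrite /unit_vec; case: eqP => _; rewrite ?scale1r ?scale0r.
Qed.

Lemma slender_expansion : exists n0, forall N, (n0 <= N)%N ->
  forall y : forall j, B j, f y = \sum_(j <- first_elems J N) f (single (y j)).
Proof.
have [n0 Hn0] := slender_tail; exists n0 => N le_n0N y.
have restrict_sum (s : seq J) : uniq s ->
    f (fun j => if j \in s then y j else 0) = \sum_(j <- s) f (single (y j)).
  elim: s => [|j s IH] /=; first by rewrite big_nil -hom_prod0.
  case/andP => js us; rewrite big_cons -IH // -fD; congr f.
  apply: functional_extensionality_dep => j'; rewrite in_cons.
  have [->|j'j] := eqVneq j' j; first by rewrite (negbTE js) single_eq addr0.
  by rewrite single_neq 1?eq_sym // add0r.
rewrite -restrict_sum ?first_elems_uniq //; apply/eqP; rewrite -subr_eq0 -hom_prodB.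
apply/eqP/Hn0 => j lt_j_n0.
by rewrite mem_first_elems (leq_trans lt_j_n0 le_n0N) subrr.
Qed.

End SlenderExpansion.

Lemma prod_iso_can (R : pzRingType) (I J : Type) (A : I -> rmod R) (B : J -> rmod R)
    (Phi : (forall i, A i) -> forall j, B j)
    (Psi : (forall j, B j) -> forall i, A i) :
  prod_iso Phi -> cancel Phi Psi -> cancel Psi Phi -> prod_iso Psi.
Proof.
move=> [_ [PhiD PhiZ]] PhiK PsiK; split; first by exists Phi.
by split=> [y z|r y]; apply: (can_inj PhiK); rewrite ?PhiD ?PhiZ !PsiK.
Qed.

Lemma big_seq_sub (T : choiceType) (s : seq T) (V : zmodType) (G : T -> V) :
  uniq s -> \sum_(k : seq_sub s) G (val k) = \sum_(j <- s) G j.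
Proof.
move=> us; rewrite -[in RHS](val_seq_sub_enum us) big_map.
apply: perm_big; apply: uniq_perm; first exact: index_enum_uniq.
  by rewrite /seq_sub_enum undup_uniq.
by move=> k; rewrite mem_index_enum mem_seq_sub_enum.
Qed.

Unset Implicit Arguments.
Section ClassTransfer.
Variables (R : pzRingType) (C : subcat R) (P Q : hom_ideal R).
Hypothesis HCobj : forall M, C M -> indecomposable M /\ slender M.
Hypotheses (HP : completely_prime C P) (HQ : completely_prime C Q).
Hypothesis Haut : forall A, C A -> forall f : A -> A, is_hom f ->
  (bijective f <-> ~ (P A A f \/ Q A A f)).
Hypothesis Hdsp : DSP C.
Variables (I J : countType) (A : I -> rmod R) (B : J -> rmod R).
Hypotheses (HA : forall i, C (A i)) (HB : forall j, C (B j)).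
Variable Phi : (forall i, A i) -> forall j, B j.
Hypothesis isoPhi : prod_iso Phi.
Set Implicit Arguments.

(* Slenderness makes every coordinate of the inverse isomorphism depend on
   finitely many coordinates only, so finitely many A i are direct summands
   of finitely many B j, and the exchange argument applies. *)
Lemma class_transfer (c0 : rmod R) (s : seq I) : C c0 -> uniq s ->
  (forall i, i \in s -> same_class P (A i) c0) ->
  exists2 t : seq J, uniq t &
    (forall j, j \in t -> same_class P (B j) c0) /\ (size s <= size t)%N.
Proof.
move=> Cc0 us cs.
have [[Psi PhiK PsiK] _] := isoPhi.
have [_ [PsiD PsiZ]] := prod_iso_can isoPhi PhiK PsiK.
have [N HN] : exists N, forall i, i \in s -> forall y : forall j, B j,
    Psi y i = \sum_(j <- first_elems J N) Psi (single (y j)) i.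
  suff [N0 HN0] : exists N0, forall N, (N0 <= N)%N -> forall i, i \in s ->
      forall y : forall j, B j,
      Psi y i = \sum_(j <- first_elems J N) Psi (single (y j)) i.
    by exists N0; apply: HN0.
  elim: (s) => [|i s' [N1 IH]]; first by exists 0%N.
  have [n0 Hn0] := @slender_expansion _ _ _ _ (fun y => Psi y i)
    (fun y z => congr1 (@^~ i) (PsiD y z)) (fun r y => congr1 (@^~ i) (PsiZ r y))
    (HCobj _ (HA i)).2.
  exists (maxn n0 N1) => N le i'; rewrite in_cons => /predU1P [->|i's'].
    by apply: Hn0; apply: leq_trans le; exact: leq_maxl.
  by apply: IH i's'; apply: leq_trans le; exact: leq_maxr.
pose al (i : seq_sub s) (k : seq_sub (first_elems J N)) (y : B (val k)) :=
  Psi (single y) (val i).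
pose be (k : seq_sub (first_elems J N)) (i : seq_sub s) (x : A (val i)) :=
  Phi (single x) (val k).
have sum_single (i i' : seq_sub s) x :
    \sum_(k | true) al i' k (be k i x) = single x (val i').
  rewrite (big_seq_sub (fun j => Psi (single (Phi (single x) j)) (val i')))
    ?first_elems_uniq //.
  by rewrite -HN ?PhiK //; exact: ssvalP.
have fam : summand_family C (fun _ : seq_sub s => true) (fun i => A (val i))
    (fun _ : seq_sub (first_elems J N) => true) (fun k => B (val k)) al be.
  split=> [i _|k _|i k _ _|i k _ _|i _ x|i i' _ _ ii' x]; rewrite ?sum_single //.
  - by split=> [y y'|r y]; rewrite /al ?singleD ?singleZ ?PsiD ?PsiZ.
  - by case: isoPhi => _ [PhiD PhiZ]; split=> [y y'|r y];
      rewrite /be ?singleD ?singleZ ?PhiD ?PhiZ.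
  - exact: single_eq.
  - exact: single_neq.
have cardF : #|[pred i : seq_sub s | true]| = size s.
  by rewrite -(card_seq_sub us); apply: eq_card.
have := summand_family_class_count (fun M CM => (HCobj M CM).1) HP HQ Haut Hdsp
  Cc0 cardF fam (fun i _ => cs _ (ssvalP i)).
rewrite /class_count => le_s_count.
exists [seq val k | k <- enum [pred k : seq_sub (first_elems J N) |
  true && `[< same_class P (B (val k)) c0 >]]].
  by rewrite (map_inj_uniq val_inj) enum_uniq.
split; last by rewrite size_map -cardE.
by move=> j /mapP [k]; rewrite mem_enum inE => /asboolP ? ->.
Qed.
End ClassTransfer.

Section PredRank.
Variables (T : countType) (p : pred T).

Definition pickle_pred (n : nat) : bool :=
  if @pickle_inv T n is Some y then p y else false.

Definition pred_rank (x : T) : nat := count pickle_pred (iota 0 (pickle x)).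

Lemma pred_rank_lt x y : p x -> (pickle x < pickle y)%N ->
  (pred_rank x < pred_rank y)%N.
Proof.
move=> px lt_xy; rewrite /pred_rank -(subnKC lt_xy) addSnnS iotaD count_cat.
rewrite add0n /= [pickle_pred (pickle x)]/pickle_pred pickleK_inv px.
by rewrite add1n addnS ltnS leq_addr.
Qed.

Lemma pred_rank_le x y : (pickle x <= pickle y)%N ->
  (pred_rank x <= pred_rank y)%N.
Proof.
by move=> le_xy; rewrite /pred_rank -(subnKC le_xy) iotaD count_cat leq_addr.
Qed.

Lemma pred_rank_inj : {in p &, injective pred_rank}.
Proof.
move=> x y px py eq_rank; apply: (pcan_inj (@pickleK_inv T)).
case: (ltngtP (pickle x) (pickle y)) => // [lt|gt].
  by have := pred_rank_lt px lt; rewrite eq_rank ltnn.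
by have := pred_rank_lt py gt; rewrite eq_rank ltnn.
Qed.

Lemma pred_rank_seq x : p x -> exists2 s : seq T, uniq s &
  all [pred y | p y && (pickle y <= pickle x)%N] s /\ size s = (pred_rank x).+1.
Proof.
move=> px; pose below n := if pickle_inv n is Some y then
  (if p y then Some y else None) else None.
have belowK : ocancel below (@pickle T).
  move=> n; rewrite /below; case E: (pickle_inv n) => [y|] //=.
  by case: (p y) => //=; have := @pickle_invK T n; rewrite E.
have mem_below y : y \in pmap below (iota 0 (pickle x)) ->
    p y /\ (pickle y < pickle x)%N.
  rewrite mem_pmap => /mapP [n]; rewrite mem_iota add0n => /andP [_ lt].
  rewrite /below; case E: (pickle_inv n) => [z|] //=; case: ifP => //= pz [->].
  by split=> //; have := @pickle_invK T n; rewrite E /= => ->.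
exists (x :: pmap below (iota 0 (pickle x))).
  rewrite /= (pmap_uniq belowK) ?iota_uniq // andbT.
  by apply/negP => /mem_below [_]; rewrite ltnn.
split.
  rewrite /= px leqnn /=; apply/allP => y /mem_below [py lt].
  by rewrite /= py ltnW.
rewrite /= size_pmap /pred_rank; congr S; apply: eq_count => n.
by rewrite /below /pickle_pred; case: (pickle_inv n) => [y|] //=; case: (p y).
Qed.

Lemma pred_rank_onto (s : seq T) k : uniq s -> all p s -> (k < size s)%N ->
  exists2 y, p y & pred_rank y = k.
Proof.
move=> us ps lt_k_s.
have [x xs le_k_x] : exists2 x, x \in s & (k <= pred_rank x)%N.
  apply: contrapT => no_x.
  have sub : {subset map pred_rank s <= iota 0 k}.
    move=> n /mapP [x xs ->]; rewrite mem_iota add0n ltnNge.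
    by apply/negP => le; apply: no_x; exists x.
  have := uniq_leq_size _ sub; rewrite size_map size_iota leqNgt lt_k_s.
  rewrite (map_inj_in_uniq _) // => [/(_ us)//|x y xs ys].
  by apply: pred_rank_inj; exact: (allP ps).
have px := allP ps x xs.
have [t ut [pt size_t]] := pred_rank_seq px.
have [_ rank_t] : (size (map pred_rank t) = size (iota 0 (pred_rank x).+1)) *
    (map pred_rank t =i iota 0 (pred_rank x).+1).
  apply: uniq_min_size; last by rewrite size_map size_iota size_t.
    rewrite (map_inj_in_uniq _) // => y z /(allP pt) /andP [py _].
    by move=> /(allP pt) /andP [pz _]; apply: pred_rank_inj.
  move=> n /mapP [y /(allP pt) /andP [_ le_yx] ->].
  by rewrite mem_iota add0n ltnS pred_rank_le.
have := rank_t k; rewrite mem_iota add0n ltnS le_k_x => /mapP [y /(allP pt)].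
by case/andP => py _ ->; exists y.
Qed.

End PredRank.


Lemma eq_pred_rank (T : countType) (p q : pred T) :
  p =1 q -> pred_rank p =1 pred_rank q.
Proof.
move=> pq x; rewrite /pred_rank; apply: eq_count => n.
by rewrite /pickle_pred; case: (pickle_inv n) => [y|] //; rewrite pq.
Qed.

Lemma pred_rank_transfer (T U : countType) (p : pred T) (q : pred U) :
  (forall s, uniq s -> all p s ->
     exists2 t, uniq t & all q t /\ (size s <= size t)%N) ->
  forall x, p x -> exists2 y, q y & pred_rank q y = pred_rank p x.
Proof.
move=> dom x px; have [s us [ps size_s]] := pred_rank_seq px.
have [|t ut [qt le_st]] := dom s us; first by apply: sub_all ps => y /andP [].
by apply: pred_rank_onto ut qt _; rewrite -ltnS -size_s.
Qed.

Unset Implicit Arguments.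
Section ClassMatching.
Variables (I J : countType) (e : rel (I + J)).
Hypothesis e_equiv : equivalence_rel e.
Hypothesis dom_IJ : forall x (s : seq I), uniq s -> all (fun i => e x (inl i)) s ->
  exists2 t : seq J, uniq t & all (fun j => e x (inr j)) t /\ (size s <= size t)%N.
Hypothesis dom_JI : forall x (t : seq J), uniq t -> all (fun j => e x (inr j)) t ->
  exists2 s : seq I, uniq s & all (fun i => e x (inl i)) s /\ (size t <= size s)%N.
Set Implicit Arguments.

Let e_refl x : e x x. Proof. by case: (e_equiv x x x). Qed.
Let e_class x y : e x y -> e x =1 e y.
Proof. by move=> exy z; case: (e_equiv x y z) => _ ->. Qed.
Let e_sym x y : e x y -> e y x.
Proof. by move=> /e_class exy; rewrite -exy e_refl. Qed.

Let rankI x := pred_rank (fun i => e x (inl i)).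
Let rankJ x := pred_rank (fun j => e x (inr j)).

Let rankI_class x y : e x y -> rankI x =1 rankI y.
Proof. by move=> /e_class exy; apply: eq_pred_rank => i; rewrite exy. Qed.
Let rankJ_class x y : e x y -> rankJ x =1 rankJ y.
Proof. by move=> /e_class exy; apply: eq_pred_rank => j; rewrite exy. Qed.

(* Inside each class, the i-th element of I (in the order of the codes) is
   matched with the i-th element of J. *)
Lemma class_matching :
  exists2 sigma : I -> J, bijective sigma & forall i, e (inl i) (inr (sigma i)).
Proof.
have [sigma sigmaP] : {sigma : I -> J & forall i,
    e (inl i) (inr (sigma i)) /\ rankJ (inl i) (sigma i) = rankI (inl i) i}.
  apply: (@choice _ _ (fun i j =>
    e (inl i) (inr j) /\ rankJ (inl i) j = rankI (inl i) i)) => i.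
  have [j eij rank_j] := pred_rank_transfer (dom_IJ (inl i)) (e_refl (inl i)).
  by exists j.
have sigma_inj : injective sigma.
  move=> i i' eq_sigma; have [ei rank_i] := sigmaP i; have [ei' rank_i'] := sigmaP i'.
  rewrite eq_sigma in ei rank_i.
  have eii' : e (inl i) (inl i') by rewrite (e_class ei) e_sym.
  apply: (@pred_rank_inj _ (fun i0 => e (inl i) (inl i0)) i i' (e_refl _) eii').
  change (rankI (inl i) i = rankI (inl i) i').
  by rewrite -rank_i (rankJ_class eii') rank_i' (rankI_class eii').
have [tau tauK] : {tau : J -> I & cancel tau sigma}.
  apply: (@choice _ _ (fun j i => sigma i = j)) => j.
  have [i eji rank_i] : exists2 i, e (inr j) (inl i) &
      rankI (inr j) i = rankJ (inr j) j.
    exact: (pred_rank_transfer (dom_JI (inr j)) (e_refl (inr j))).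
  exists i; have [ei rank_si] := sigmaP i; have eij := e_sym eji.
  apply: (@pred_rank_inj _ (fun j0 => e (inl i) (inr j0)) _ _ ei eij).
  change (rankJ (inl i) (sigma i) = rankJ (inl i) j).
  by rewrite rank_si (rankI_class eij) rank_i -(rankJ_class eij).
exists sigma; last by move=> i; case: (sigmaP i).
by exists tau => // i; apply: sigma_inj; rewrite tauK.
Qed.

End ClassMatching.

Lemma same_class_matching (R : pzRingType) (C : subcat R) (P Q : hom_ideal R)
  (HCobj : forall M, C M -> indecomposable M /\ slender M)
  (HP : completely_prime C P) (HQ : completely_prime C Q)
  (Haut : forall A, C A -> forall f : A -> A, is_hom f ->
            (bijective f <-> ~ (P A A f \/ Q A A f)))
  (Hdsp : DSP C) (I J : countType) (A : I -> rmod R) (B : J -> rmod R)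
  (HA : forall i, C (A i)) (HB : forall j, C (B j))
  (Phi : (forall i, A i) -> forall j, B j) :
  prod_iso Phi ->
  exists2 sigma : I -> J, bijective sigma &
    forall i, same_class P (A i) (B (sigma i)).
Proof.
move=> isoPhi; have [[Psi PhiK PsiK] _] := isoPhi.
have isoPsi := prod_iso_can isoPhi PhiK PsiK.
pose obj (x : I + J) : rmod R := match x with inl i => A i | inr j => B j end.
have Cobj x : C (obj x) by case: x.
pose e x y := `[< same_class P (obj x) (obj y) >].
have e_equiv : equivalence_rel e.
  move=> x y z; split; first exact/asboolP/(same_class_refl HP (Cobj z)).
  move=> /asboolP exy; apply/asboolP/asboolP => [exz|eyz].
    exact: (same_class_trans HP (Cobj y) (Cobj x) (Cobj z) (same_class_sym exy) exz).
  exact: (same_class_trans HP (Cobj x) (Cobj y) (Cobj z) exy eyz).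
have dom (K L : countType) (AK : K -> rmod R) (BL : L -> rmod R)
    (iso : (forall k, AK k) -> forall l, BL l) x (s : seq K) :
    (forall k, C (AK k)) -> (forall l, C (BL l)) -> prod_iso iso -> C x -> uniq s ->
    all (fun k => `[< same_class P x (AK k) >]) s ->
    exists2 t : seq L, uniq t &
      all (fun l => `[< same_class P x (BL l) >]) t /\ (size s <= size t)%N.
  move=> CAK CBL isoKL Cx us /allP cs.
  have [|t ut [ct le_st]] := class_transfer HCobj HP HQ Haut Hdsp CAK CBL isoKL Cx us.
    by move=> k /cs /asboolP /same_class_sym.
  by exists t => //; split=> //; apply/allP => l /ct /same_class_sym /asboolP.
have [sigma bij_sigma e_sigma] := @class_matching I J e e_equiv
  (fun x s => dom _ _ _ _ Phi (obj x) s HA HB isoPhi (Cobj x))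
  (fun x t => dom _ _ _ _ Psi (obj x) t HB HA isoPsi (Cobj x)).
by exists sigma => // i; apply/asboolP/e_sigma.
Qed.

Theorem corollary5p4 (R : pzRingType) (C : subcat R) (P Q : hom_ideal R)
  (HCobj : forall M, C M -> indecomposable M /\ slender M)
  (HP : completely_prime C P) (HQ : completely_prime C Q)
  (Haut : forall A, C A -> forall f : A -> A, is_hom f ->
            (bijective f <-> ~ (P A A f \/ Q A A f)))
  (Hdsp : DSP C)
  (I J : countType) (A : I -> rmod R) (B : J -> rmod R)
  (HA : forall i, C (A i)) (HB : forall j, C (B j))
  (Hiso : exists Phi, @prod_iso R I J A B Phi) :
  exists sigma tau : I -> J, bijective sigma /\ bijective tau /\
    (forall i, same_class P (A i) (B (sigma i)) /\
               same_class Q (A i) (B (tau i))).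
Proof.
have [Phi isoPhi] := Hiso.
have HautQP X : C X -> forall f : X -> X, is_hom f ->
    (bijective f <-> ~ (Q X X f \/ P X X f)).
  by move=> CX f hf; rewrite (Haut X CX f hf) or_comm.
have [sigma bij_sigma Psigma] :=
  same_class_matching HCobj HP HQ Haut Hdsp HA HB isoPhi.
have [tau bij_tau Qtau] :=
  same_class_matching HCobj HQ HP HautQP Hdsp HA HB isoPhi.
by exists sigma, tau.
Qed.
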